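(* Let $G=(V,E)$ be an undirected graph (not necessarily locally finite), let $X\subset V$ with $\mathrm{width}(X)<+\infty$, let $Y=V\setminus X$, and let $f\in L^\infty(X)$ and $g\in L^\infty(Y)$ be bounded real-valued functions. Then the Dirichlet problem \[ \begin{cases}\Delta_\infty u(x)=f(x), & x\in X,\\ u(x)=g(x), & x\in Y,\end{cases} \] admits a bounded solution $u:V\to\mathbb{R}$. Moreover, if $f\ge 0$ on $X$ or $f\le 0$ on $X$, then this bounded solution is unique (i.e. any two bounded solutions coincide).
   Context: For $x,y\in V$ write $x\sim y$ if $\{x,y\}\in E$. The combinatorial distance $d(A,B)$ between subsets $A,B\subset V$ is the infimum of the lengths $n$ of paths $A\ni x_0\sim x_1\sim\cdots\sim x_n\in B$ (and $d(A,x)=d(A,\{x\})$). The boundary of $X$ is $\partial X=\{y\notin X:\ y\sim x \text{ for some } x\in X\}$, and $\mathrm{width}(X)=\sup_{x\in X} d(\partial X,x)$. For $u:V\to\mathbb{R}$ the discrete infinity Laplacian is $\Delta_\infty u(x)=\inf_{y\sim x}u(y)+\sup_{y\sim x}u(y)-2u(x)$. *)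

From HB Require Import structures.
From mathcomp Require Import all_boot all_order all_algebra.
From mathcomp Require Import all_classical all_reals ereal.
Set Implicit Arguments. Unset Strict Implicit. Unset Printing Implicit Defensive.
Import Order.TTheory GRing.Theory Num.Theory.
Local Open Scope classical_set_scope.
Local Open Scope ring_scope.

Section GraphDefs.
Variable V : Type.
Variable adj : V -> V -> Prop.

Inductive walk : nat -> V -> V -> Prop :=
| walk0 a : walk 0 a a
| walkS n a b c : walk n a b -> adj b c -> walk n.+1 a c.

(* combinatorial distance d(A,B) in \bar R (+oo if no path) *)
Definition gdist (R : realType) (A B : set V) : \bar R :=
  ereal_inf [set (n%:R)%:E | n in [set n : nat | exists a b, A a /\ B b /\ walk n a b]].

Definition bdry (X : set V) : set V :=
  [set y | ~ X y /\ exists x, X x /\ adj y x].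

Definition width (R : realType) (X : set V) : \bar R :=
  ereal_sup [set @gdist R (bdry X) [set x] | x in X].

Definition inf_lap (R : realType) (u : V -> R) (x : V) : R :=
  inf [set u y | y in adj x] + sup [set u y | y in adj x] - 2 * u x.

Definition bounded_on (R : realType) (u : V -> R) (A : set V) : Prop :=
  exists M : R, forall x, A x -> `|u x| <= M.

Definition dirichlet_sol (R : realType) (X : set V) (f g u : V -> R) : Prop :=
  (forall x, X x -> inf_lap u x = f x) /\ (forall x, ~ X x -> u x = g x).
End GraphDefs.

(* Existence is Perron's method.  Let d be the combinatorial depth of a
   vertex in X, bounded by N since width(X) is finite.  The operator
   h |-> (inf_{y~x} h + sup_{y~x} h - f x) / 2 on X (and g off X) is monotone,
   its fixed points are exactly the solutions, and the discrete parabola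
   G + F/2 * d (2(N+1) - d), whose second difference is -F, yields a
   supersolution above the data and, by symmetry, a subsolution below them.
   The pointwise supremum of the subsolutions lying between these barriers is
   then a fixed point.

   Uniqueness for f >= 0 (f <= 0 follows by negation) is a comparison
   principle without compactness.  If w = u - v has supremum M > 0, then from
   a point where w is within g of M one can step to a neighbour where u almost
   attains its neighbourhood supremum and w is within 3g of M.  Since the
   infinity Laplacian of u is nonnegative, the slope sup_{y~x} u - u x drops by
   at most g along such a chain while u climbs by that slope, so boundedness of
   u forces the slope to be small; then w stays close to M at every neighbour,
   including one of smaller depth.  Inductively, points where w is close
   enough to M have depth larger than N, which is absurd. *)

From HB Require Import structures.
From mathcomp Require Import all_boot all_order all_algebra.
From mathcomp Require Import all_classical all_reals ereal.
From mathcomp Require Import ring lra zify.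
Import Order.TTheory GRing.Theory Num.Theory.
Local Open Scope classical_set_scope.
Local Open Scope ring_scope.
Set Implicit Arguments.
Unset Strict Implicit.
Unset Printing Implicit Defensive.

Section SupInfImage.
Variables (R : realType) (T : Type) (A : set T) (h : T -> R).

Lemma le_sup_image C y : (forall z, A z -> h z <= C) -> A y -> h y <= sup (h @` A).
Proof.
move=> hC Ay; apply: ub_le_sup; last by exists y.
by exists C => _ [z Az <-]; apply: hC.
Qed.

Lemma sup_image_le c : A !=set0 -> (forall y, A y -> h y <= c) -> sup (h @` A) <= c.
Proof.
move=> [y0 Ay0] hc; apply: ge_sup; first by exists (h y0), y0.
by move=> _ [z Az <-]; apply: hc.
Qed.

Lemma sup_image_adherent C eps : A !=set0 -> (forall y, A y -> h y <= C) ->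
  0 < eps -> exists2 y, A y & sup (h @` A) - eps < h y.
Proof.
move=> [y0 Ay0] hC eps_gt0.
have hs : has_sup (h @` A).
  by split; [exists (h y0), y0 | exists C => _ [z Az <-]; apply: hC].
by have [_ [y Ay <-] hy] := sup_adherent eps_gt0 hs; exists y.
Qed.

Lemma inf_image_le C y : (forall z, A z -> C <= h z) -> A y -> inf (h @` A) <= h y.
Proof.
move=> hC Ay; apply: ge_inf; last by exists y.
by exists C => _ [z Az <-]; apply: hC.
Qed.

Lemma le_inf_image c : A !=set0 -> (forall y, A y -> c <= h y) -> c <= inf (h @` A).
Proof.
move=> [y0 Ay0] hc; apply: lb_le_inf; first by exists (h y0), y0.
by move=> _ [z Az <-]; apply: hc.
Qed.

End SupInfImage.

Section Neighbours.
Variables (R : realType) (V : Type) (adj : V -> V -> Prop).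
Implicit Types (h u : V -> R) (x y : V).

Definition nbr_inf h x := inf [set h y | y in adj x].
Definition nbr_sup h x := sup [set h y | y in adj x].

Lemma inf_lapE u x : inf_lap adj u x = nbr_inf u x + nbr_sup u x - 2 * u x.
Proof. by []. Qed.

Lemma nbr_sup_opp h x : nbr_sup (fun y => - h y) x = - nbr_inf h x.
Proof. by rewrite /nbr_inf /inf opprK image_comp. Qed.

Lemma nbr_inf_opp h x : nbr_inf (fun y => - h y) x = - nbr_sup h x.
Proof.
rewrite /nbr_inf /inf image_comp; congr (- sup _).
by apply: eq_imagel => y _ /=; rewrite opprK.
Qed.

Lemma inf_lap_opp u x : inf_lap adj (fun y => - u y) x = - inf_lap adj u x.
Proof. by rewrite !inf_lapE nbr_inf_opp nbr_sup_opp; ring. Qed.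

Lemma nbr_inf_le h C x y : (forall z, C <= h z) -> adj x y -> nbr_inf h x <= h y.
Proof. by move=> hC; apply: (inf_image_le (fun z _ => hC z)). Qed.

Lemma le_nbr_sup h C x y : (forall z, h z <= C) -> adj x y -> h y <= nbr_sup h x.
Proof. by move=> hC; apply: (le_sup_image (fun z _ => hC z)). Qed.

End Neighbours.

Section Depth.
Variables (V : Type) (adj : V -> V -> Prop).

Lemma walk0_inv a c : walk adj 0 a c -> a = c.
Proof. by move=> w_ac; inversion w_ac. Qed.

Lemma walkS_inv n a c : walk adj n.+1 a c -> exists2 b, walk adj n a b & adj b c.
Proof. by move=> w_ac; inversion w_ac; exists b. Qed.

Variables (X : set V) (N : nat).

Definition walk_from_compl n x := exists2 a, ~ X a & walk adj n a x.

Hypothesis depth_bounded : forall x, X x -> exists2 n, (n <= N)%N & walk_from_compl n x.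

Lemma walk_from_compl_ex x : exists n, `[< walk_from_compl n x >].
Proof.
have [Xx|nXx] := pselect (X x).
  by have [n _ hn] := depth_bounded Xx; exists n; apply/asboolP.
by exists 0%N; apply/asboolP; exists x => //; apply: walk0.
Qed.

Definition depth x := ex_minn (walk_from_compl_ex x).

Lemma depthP x : walk_from_compl (depth x) x.
Proof. by rewrite /depth; case: ex_minnP => m /asboolP. Qed.

Lemma depth_min n x : walk_from_compl n x -> (depth x <= n)%N.
Proof. by move=> hn; rewrite /depth; case: ex_minnP => m _; apply; apply/asboolP. Qed.

Lemma depth_out x : ~ X x -> depth x = 0%N.
Proof.
move=> nXx; apply/eqP; rewrite -leqn0; apply: depth_min.
by exists x => //; apply: walk0.
Qed.

Lemma depth_le_N x : (depth x <= N)%N.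
Proof.
have [Xx|nXx] := pselect (X x); last by rewrite depth_out.
by have [n le_nN hn] := depth_bounded Xx; apply: leq_trans (depth_min hn) le_nN.
Qed.

Lemma depth_lip x y : adj x y -> (depth y <= (depth x).+1)%N.
Proof.
move=> axy; have [a nXa w_ax] := depthP x.
by apply: depth_min; exists a => //; apply: walkS w_ax axy.
Qed.

Hypothesis adj_sym : forall x y, adj x y -> adj y x.

Lemma depth_desc x : X x -> exists2 y, adj x y & (depth y < depth x)%N.
Proof.
move=> Xx; have [a nXa] := depthP x.
case: (depth x) => [|m] w_ax; first by move: nXa; rewrite (walk0_inv w_ax).
have [b w_ab adj_bx] := walkS_inv w_ax.
by exists b; [apply: adj_sym | rewrite ltnS; apply: depth_min; exists a].
Qed.

End Depth.

Lemma width_depth_bounded (R : realType) (V : Type) (adj : V -> V -> Prop) (X : set V) :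
  (width adj R X < +oo)%E ->
  exists N, forall x, X x -> exists2 n, (n <= N)%N & walk_from_compl adj X n x.
Proof.
move=> width_fin.
have [r width_lt] : exists r : R, (width adj R X < r%:E)%E.
  move: width_fin; case: (width adj R X) => [r| |] // _.
    by exists (r + 1); rewrite lte_fin ltrDl.
  by exists 0; rewrite ltNyr.
exists (Num.truncn r).+1 => x Xx.
have : (gdist adj R (bdry adj X) [set x] < r%:E)%E.
  by apply: le_lt_trans width_lt; apply: ereal_sup_ubound; exists x.
move=> /ereal_inf_lt [_ [n [a [b [[nXa _] [/= <- w_ab]]]]] <-].
rewrite lte_fin => lt_nr; exists n; last by exists a.
by apply: ltnW; rewrite -(ltr_nat R); apply: lt_trans (truncnS_gt r).
Qed.

Section PerronFixpoint.
Variables (R : realType) (T : Type) (Phi : (T -> R) -> T -> R) (lo hi : T -> R).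
Hypothesis lo_le_hi : forall x, lo x <= hi x.
Hypothesis lo_sub : forall x, lo x <= Phi lo x.
Hypothesis hi_super : forall x, Phi hi x <= hi x.
Hypothesis Phi_mono : forall h1 h2, (forall x, lo x <= h1 x) -> (forall x, h2 x <= hi x) ->
  (forall x, h1 x <= h2 x) -> forall x, Phi h1 x <= Phi h2 x.

Definition perron_class (h : T -> R) :=
  (forall x, lo x <= h x <= hi x) /\ (forall x, h x <= Phi h x).

Let top x := sup [set h x | h in perron_class].

Let lo_class : perron_class lo.
Proof. by split => // x; rewrite lexx lo_le_hi. Qed.

Let le_top h x : perron_class h -> h x <= top x.
Proof.
move=> h_class; apply: (le_sup_image (h := fun k => k x) (C := hi x) _ h_class).
by move=> k [k_bnd _]; case/andP: (k_bnd x).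
Qed.

Let top_bnd x : lo x <= top x <= hi x.
Proof.
rewrite le_top //=; apply: (sup_image_le (h := fun k => k x)); first by exists lo.
by move=> h [h_bnd _]; case/andP: (h_bnd x).
Qed.

Let lo_le_top x : lo x <= top x. Proof. by case/andP: (top_bnd x). Qed.
Let top_le_hi x : top x <= hi x. Proof. by case/andP: (top_bnd x). Qed.

Let top_le_Phi x : top x <= Phi top x.
Proof.
apply: (sup_image_le (h := fun k => k x)); first by exists lo.
move=> h [h_bnd h_sub]; apply: le_trans (h_sub x) _.
by apply: Phi_mono => // y; [case/andP: (h_bnd y) | apply: le_top].
Qed.

Let Phi_top_class : perron_class (Phi top).
Proof.
have Phi_top_bnd x : lo x <= Phi top x <= hi x.
  apply/andP; split; first by apply: le_trans (lo_sub x) _; apply: Phi_mono.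
  by apply: le_trans _ (hi_super x); apply: Phi_mono.
split=> // x; apply: Phi_mono => // y.
by case/andP: (Phi_top_bnd y).
Qed.

Theorem perron_fixpoint :
  exists u, (forall x, lo x <= u x <= hi x) /\ forall x, Phi u x = u x.
Proof.
exists top; split => // x.
by apply/eqP; rewrite eq_le le_top // top_le_Phi.
Qed.

End PerronFixpoint.

Section Existence.
Variables (R : realType) (V : Type) (adj : V -> V -> Prop) (X : set V).
Variables (d : V -> nat) (N : nat).
Hypothesis d_le : forall x, (d x <= N)%N.
Hypothesis d_out : forall x, ~ X x -> d x = 0%N.
Hypothesis d_desc : forall x, X x -> exists2 y, adj x y & (d y < d x)%N.
Hypothesis d_lip : forall x y, adj x y -> (d y <= (d x).+1)%N.

Local Notation NI := (nbr_inf adj).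
Local Notation NS := (nbr_sup adj).

Definition perron_step (f g h : V -> R) x :=
  if `[< X x >] then (NI h x + NS h x - f x) / 2 else g x.

Lemma perron_step_fixpoint f g u :
  (forall x, perron_step f g u x = u x) -> dirichlet_sol adj X f g u.
Proof.
move=> u_fix; split=> x Xx; have := u_fix x; rewrite /perron_step.
  by rewrite asboolT // inf_lapE; lra.
by rewrite asboolF.
Qed.

Lemma perron_step_opp f g h x :
  perron_step f g (fun y => - h y) x =
  - perron_step (fun y => - f y) (fun y => - g y) h x.
Proof. by rewrite /perron_step nbr_inf_opp nbr_sup_opp; case: asboolP => _ //; lra. Qed.

Lemma perron_step_mono f g h1 h2 C1 C2 :
  (forall y, C1 <= h1 y) -> (forall y, h2 y <= C2) -> (forall y, h1 y <= h2 y) ->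
  forall x, perron_step f g h1 x <= perron_step f g h2 x.
Proof.
move=> h1_ge h2_le le_h12 x; rewrite /perron_step; case: asboolP => // Xx.
have nbr_x : adj x !=set0 by case: (d_desc Xx) => y; exists y.
have NI_le : NI h1 x <= NI h2 x.
  apply: le_inf_image nbr_x _ => y axy.
  exact: le_trans (nbr_inf_le h1_ge axy) (le_h12 y).
have NS_le : NS h1 x <= NS h2 x.
  apply: sup_image_le nbr_x _ => y axy.
  exact: le_trans (le_h12 y) (le_nbr_sup h2_le axy).
lra.
Qed.

Variables (F G : R).
Hypotheses (F_ge0 : 0 <= F) (G_ge0 : 0 <= G).

Definition barrier_profile (j : nat) : R :=
  G + F / 2 * (j%:R * (2 * N.+1%:R - j%:R)).

Lemma barrier_profile0 : barrier_profile 0 = G.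
Proof. by rewrite /barrier_profile mul0r mulr0 addr0. Qed.

Lemma barrier_profile_diff2 k :
  barrier_profile k + barrier_profile k.+2 - 2 * barrier_profile k.+1 = - F.
Proof. by rewrite /barrier_profile -[k.+2]addn2 -[k.+1]addn1 !natrD; field. Qed.

Lemma barrier_profile_le i j : (i <= j <= N.+1)%N -> barrier_profile i <= barrier_profile j.
Proof.
case/andP=> le_ij le_jN.
have i_ge0 : 0 <= i%:R :> R by [].
have le_ij' : i%:R <= j%:R :> R by rewrite ler_nat.
have le_jN' : j%:R <= N.+1%:R :> R by rewrite ler_nat.
rewrite /barrier_profile lerD2l ler_wpM2l ?divr_ge0 //; nra.
Qed.

Definition barrier x := barrier_profile (d x).

Lemma barrier_ge x : G <= barrier x.
Proof. by rewrite -barrier_profile0; apply: barrier_profile_le; have := d_le x; lia. Qed.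

Lemma barrier_le x : barrier x <= barrier_profile N.
Proof. by apply: barrier_profile_le; have := d_le x; lia. Qed.

Lemma barrier_super f g :
  (forall x, X x -> `|f x| <= F) -> (forall x, ~ X x -> `|g x| <= G) ->
  forall x, perron_step f g barrier x <= barrier x.
Proof.
move=> f_bnd g_bnd x; rewrite /perron_step; case: asboolP => Xx; last first.
  rewrite /barrier d_out // barrier_profile0.
  by have := g_bnd x Xx; rewrite ler_norml => /andP[].
have [y0 axy0 dy0] := d_desc Xx.
have [k dx] : exists k, d x = k.+1 by case: (d x) dy0 => // k _; exists k.
have dxN := d_le x.
have NI_le : NI barrier x <= barrier_profile k.
  apply: le_trans (nbr_inf_le barrier_ge axy0) _.
  by apply: barrier_profile_le; lia.
have NS_le : NS barrier x <= barrier_profile k.+2.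
  apply: sup_image_le; first by exists y0.
  by move=> y axy; apply: barrier_profile_le; have := d_lip axy; lia.
have bx : barrier x = barrier_profile k.+1 by rewrite /barrier dx.
have := barrier_profile_diff2 k; have := f_bnd x Xx; rewrite ler_norml bx.
move: (NI _ x) (NS _ x) NI_le NS_le => a b NI_le NS_le /andP[? ?]; lra.
Qed.

Lemma barrier_sub f g :
  (forall x, X x -> `|f x| <= F) -> (forall x, ~ X x -> `|g x| <= G) ->
  forall x, - barrier x <= perron_step f g (fun y => - barrier y) x.
Proof.
move=> f_bnd g_bnd x; rewrite perron_step_opp lerN2.
by apply: barrier_super => y ?; rewrite normrN; [apply: f_bnd | apply: g_bnd].
Qed.

Theorem dirichlet_exists f g :
  (forall x, X x -> `|f x| <= F) -> (forall x, ~ X x -> `|g x| <= G) ->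
  exists u, bounded_on u setT /\ dirichlet_sol adj X f g u.
Proof.
move=> f_bnd g_bnd.
have barrier_sym y : - barrier y <= barrier y.
  by have := barrier_ge y; have := G_ge0; lra.
have step_mono h1 h2 : (forall y, - barrier y <= h1 y) -> (forall y, h2 y <= barrier y) ->
    (forall y, h1 y <= h2 y) -> forall x, perron_step f g h1 x <= perron_step f g h2 x.
  move=> h1_ge h2_le.
  have h1_lb y : - barrier_profile N <= h1 y.
    by apply: le_trans (h1_ge y); rewrite lerN2 barrier_le.
  have h2_ub y : h2 y <= barrier_profile N by apply: le_trans (h2_le y) (barrier_le y).
  exact: perron_step_mono h1_lb h2_ub.
have [u [u_bnd u_fix]] := perron_fixpoint barrier_sym
  (barrier_sub f_bnd g_bnd) (barrier_super f_bnd g_bnd) step_mono.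
exists u; split; last exact: perron_step_fixpoint.
exists (barrier_profile N) => x _; rewrite ler_norml.
have := barrier_le x; case/andP: (u_bnd x) => ? ? ?.
by apply/andP; split; lra.
Qed.

End Existence.

Section Comparison.
Variables (R : realType) (V : Type) (adj : V -> V -> Prop).
Hypothesis adj_sym : forall x y, adj x y -> adj y x.
Variables (X : set V) (d : V -> nat) (N : nat).
Hypothesis d_le : forall x, (d x <= N)%N.
Hypothesis d_desc : forall x, X x -> exists2 y, adj x y & (d y < d x)%N.
Variables (u v : V -> R) (B : R).
Hypothesis u_bound : forall x, `|u x| <= B.
Hypothesis v_bound : forall x, `|v x| <= B.
Hypothesis lap_u_ge0 : forall x, X x -> 0 <= inf_lap adj u x.
Hypothesis lap_v_le_u : forall x, X x -> inf_lap adj v x <= inf_lap adj u x.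
Hypothesis u_le_v_out : forall x, ~ X x -> u x <= v x.

Local Notation NI := (nbr_inf adj).
Local Notation NS := (nbr_sup adj).
Let w x := u x - v x.

Let u_ge x : - B <= u x. Proof. by have := u_bound x; rewrite ler_norml => /andP[]. Qed.
Let u_le x : u x <= B. Proof. by have := u_bound x; rewrite ler_norml => /andP[]. Qed.
Let v_ge x : - B <= v x. Proof. by have := v_bound x; rewrite ler_norml => /andP[]. Qed.
Let v_le x : v x <= B. Proof. by have := v_bound x; rewrite ler_norml => /andP[]. Qed.
Let nbr_X x : X x -> adj x !=set0. Proof. by case/d_desc => y axy _; exists y. Qed.

Lemma pos_diff_in x : 0 < w x -> X x.
Proof. by move=> hw; apply: contrapT => /u_le_v_out; move: hw; rewrite /w; lra. Qed.

Section NearMaximum.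
Variable M : R.
Hypothesis w_le_M : forall x, w x <= M.

Lemma nbr_inf_diff_le x : X x -> NI u x - NI v x <= M.
Proof.
move=> Xx; suff : NI u x - M <= NI v x by lra.
apply: le_inf_image (nbr_X Xx) _ => y axy.
by have := nbr_inf_le u_ge axy; have := w_le_M y; rewrite /w; lra.
Qed.

Lemma ascent_step x g e : X x -> M - g < w x -> 0 < e ->
  exists2 z, adj x z & NS u x - e < u z /\ M - 2 * g - e < w z.
Proof.
move=> Xx hwx e_gt0.
have [z axz hz] := sup_image_adherent (nbr_X Xx) (fun y _ => u_le y) e_gt0.
exists z => //; split => //.
have := nbr_inf_diff_le Xx; have := lap_v_le_u Xx; rewrite !inf_lapE.
by have := le_nbr_sup v_le axz; move: hwx hz; rewrite /w /nbr_sup; lra.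
Qed.

Lemma slope_nbr x z : X z -> adj x z -> u z - u x <= NS u z - u z.
Proof.
move=> Xz axz; have := nbr_inf_le u_ge (adj_sym axz).
by have := lap_u_ge0 Xz; rewrite inf_lapE; lra.
Qed.

Lemma slope_chain K : forall g x, 0 < g -> 3 ^+ K * g <= M -> M - g < w x ->
  u x + K%:R * (NS u x - u x) <= B + K%:R * (3 ^+ K * g).
Proof.
elim: K => [|K IH] g x g_gt0 gM hwx; first by rewrite !mul0r !addr0.
have pow_ge1 : 1 <= 3 ^+ K :> R by apply: exprn_ege1; lra.
have Xx : X x by apply: pos_diff_in; move: gM; rewrite exprSr; nra.
have [z axz [hz hwz]] := ascent_step Xx hwx g_gt0.
have Xz : X z by apply: pos_diff_in; move: gM; rewrite exprSr; nra.
have hwz3 : M - 3 * g < w z by lra.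
have gM3 : 3 ^+ K * (3 * g) <= M by rewrite mulrA -exprSr.
have := IH (3 * g) z ltac:(lra) gM3 hwz3; rewrite [3 ^+ K * _]mulrA -exprSr => IHz.
have slope := slope_nbr Xz axz.
have K_ge0 : 0 <= K%:R :> R by [].
have K1 : K.+1%:R <= 3 ^+ K.+1 :> R.
  by rewrite -natrX ler_nat; apply: ltnW; apply: ltn_expl.
have : K%:R * (NS u x - u x - g) <= K%:R * (NS u z - u z).
  by apply: ler_wpM2l => //; lra.
have : K.+1%:R * g <= 3 ^+ K.+1 * g by apply: ler_wpM2r => //; lra.
move: IHz; rewrite -natr1; nra.
Qed.

Lemma near_max_nbr x g s y : X x -> M - g < w x -> NS u x - u x <= s -> adj x y ->
  M - 2 * g - 2 * s < w y.
Proof.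
move=> Xx hwx hs axy.
have := nbr_inf_le u_ge axy; have := le_nbr_sup v_le axy.
have := nbr_inf_diff_le Xx; have := lap_v_le_u Xx; have := lap_u_ge0 Xx.
by rewrite !inf_lapE; move: hwx hs; rewrite /w; lra.
Qed.

Lemma near_max_deep k : 0 < M ->
  exists g, [/\ 0 < g, g <= M & forall x, M - g < w x -> (k <= d x)%N].
Proof.
move=> M_gt0; elim: k => [|k [g [g_gt0 gM IH]]]; first by exists M.
(* With K g > 32 B, [slope_chain] bounds the slope at x by g / 8, and then
   [near_max_nbr] keeps w above M - g at every neighbour of x. *)
pose K := (Num.truncn (32 * B / g)).+1.
pose P : R := 3 ^+ K.
have P_ge1 : 1 <= P by apply: exprn_ege1; lra.
have KgB : 32 * B < K%:R * g by rewrite -ltr_pdivrMr // truncnS_gt.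
pose g' := g / (16 * P).
have g'_gt0 : 0 < g' by apply: divr_gt0 => //; nra.
have Pg' : P * g' = g / 16 by rewrite /g'; field; rewrite gt_eqF //; lra.
have g'_le : g' <= g / 16 by rewrite -Pg'; nra.
exists g'; split => //; first lra.
move=> x hwx; have hkx := IH x ltac:(lra).
rewrite ltn_neqAle hkx andbT; apply/eqP => ekx.
have Xx : X x by apply: pos_diff_in; lra.
have := slope_chain g'_gt0 (_ : P * g' <= M) hwx.
rewrite -/P Pg' => /(_ ltac:(lra)) chain.
have K_gt0 : 0 < K%:R :> R by rewrite ltr0n.
have flat : NS u x - u x < g / 8.
  by rewrite -(ltr_pM2l K_gt0); have := u_ge x; nra.
have [y axy dyx] := d_desc Xx.
have hwy := near_max_nbr Xx hwx (ltW flat) axy.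
by have := IH y ltac:(lra); rewrite leqNgt ekx dyx.
Qed.

End NearMaximum.

Theorem comparison_principle x : u x <= v x.
Proof.
rewrite leNgt; apply/negP => vu.
have w_bnd y : setT y -> w y <= B + B.
  by move=> _; have := u_le y; have := v_ge y; rewrite /w; lra.
pose M := sup (w @` setT).
have w_le_M y : w y <= M by apply: le_sup_image w_bnd _.
have M_gt0 : 0 < M by have := w_le_M x; rewrite /w; lra.
have [g [g_gt0 _ deep]] := near_max_deep w_le_M N.+1 M_gt0.
have [y _ hy] := sup_image_adherent (ex_intro _ x I) w_bnd g_gt0.
by have := deep y hy; rewrite ltnNge d_le.
Qed.

End Comparison.

Section Uniqueness.
Variables (R : realType) (V : Type) (adj : V -> V -> Prop).
Hypothesis adj_sym : forall x y, adj x y -> adj y x.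
Variables (X : set V) (d : V -> nat) (N : nat).
Hypothesis d_le : forall x, (d x <= N)%N.
Hypothesis d_desc : forall x, X x -> exists2 y, adj x y & (d y < d x)%N.

Lemma dirichlet_sol_opp (f g u : V -> R) : dirichlet_sol adj X f g u ->
  dirichlet_sol adj X (fun x => - f x) (fun x => - g x) (fun x => - u x).
Proof. by case=> u_lap u_out; split=> x Xx; rewrite ?inf_lap_opp ?u_lap ?u_out. Qed.

Lemma dirichlet_sol_le (f g u v : V -> R) (B : R) : (forall x, X x -> 0 <= f x) ->
  (forall x, `|u x| <= B) -> (forall x, `|v x| <= B) ->
  dirichlet_sol adj X f g u -> dirichlet_sol adj X f g v -> forall x, u x <= v x.
Proof.
move=> f_ge0 u_bnd v_bnd [u_lap u_out] [v_lap v_out].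
apply: (comparison_principle adj_sym d_le d_desc u_bnd v_bnd) => x Xx.
- by rewrite u_lap // f_ge0.
- by rewrite u_lap // v_lap.
- by rewrite u_out // v_out.
Qed.

Lemma dirichlet_sol_unique (f g u v : V -> R) (B : R) :
  (forall x, X x -> 0 <= f x) \/ (forall x, X x -> f x <= 0) ->
  (forall x, `|u x| <= B) -> (forall x, `|v x| <= B) ->
  dirichlet_sol adj X f g u -> dirichlet_sol adj X f g v -> u = v.
Proof.
move=> f_sign u_bnd v_bnd u_sol v_sol.
suff le_sol w1 w2 : (forall x, `|w1 x| <= B) -> (forall x, `|w2 x| <= B) ->
    dirichlet_sol adj X f g w1 -> dirichlet_sol adj X f g w2 -> forall x, w1 x <= w2 x.
  by apply: funext => x; apply/le_anti; rewrite !le_sol.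
move=> w1_bnd w2_bnd w1_sol w2_sol x; case: f_sign => [f_ge0|f_le0].
  exact: dirichlet_sol_le f_ge0 w1_bnd w2_bnd w1_sol w2_sol x.
rewrite -lerN2; apply: (dirichlet_sol_le (f := fun y => - f y) _ _ _
  (dirichlet_sol_opp w2_sol) (dirichlet_sol_opp w1_sol)) => y.
- by move=> /f_le0; rewrite oppr_ge0.
- by rewrite normrN.
- by rewrite normrN.
Qed.

End Uniqueness.

Lemma bounded_on_ge0 (R : realType) (T : Type) (h : T -> R) (A : set T) :
  bounded_on h A -> exists2 M, 0 <= M & forall x, A x -> `|h x| <= M.
Proof. by case=> M hM; exists `|M| => // x Ax; apply: le_trans (hM x Ax) (ler_norm M). Qed.

Theorem theorem1p1 (R : realType) (V : Type) (adj : V -> V -> Prop)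
  (adj_sym : forall x y, adj x y -> adj y x)
  (adj_irr : forall x, ~ adj x x)
  (X : set V) (f g : V -> R)
  (hX : (@width V adj R X < +oo)%E)
  (hf : bounded_on f X) (hg : bounded_on g (~` X)) :
  (exists u : V -> R, bounded_on u setT /\ dirichlet_sol adj X f g u) /\
  ((forall x, X x -> 0 <= f x) \/ (forall x, X x -> f x <= 0) ->
   forall u v : V -> R,
     bounded_on u setT -> dirichlet_sol adj X f g u ->
     bounded_on v setT -> dirichlet_sol adj X f g v -> u = v).
Proof.
have [N depth_bnd] := width_depth_bounded hX.
have d_le := depth_le_N depth_bnd.
have d_desc := depth_desc depth_bnd adj_sym.
split.
  have [F F_ge0 f_bnd] := bounded_on_ge0 hf.
  have [G G_ge0 g_bnd] := bounded_on_ge0 hg.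
  exact: (dirichlet_exists d_le (depth_out depth_bnd) d_desc
    (depth_lip depth_bnd) F_ge0 G_ge0 f_bnd g_bnd).
move=> f_sign u v [Bu u_bnd] u_sol [Bv v_bnd] v_sol.
have u_bnd' x : `|u x| <= Num.max Bu Bv by rewrite le_max u_bnd.
have v_bnd' x : `|v x| <= Num.max Bu Bv by rewrite le_max v_bnd ?orbT.
exact: (dirichlet_sol_unique adj_sym d_le d_desc f_sign u_bnd' v_bnd' u_sol v_sol).
Qed.
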